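(* In the standing setup below, for every $p\ge0$, sending $f\in\ker\big(I^pC^p\xrightarrow{\partial}I^pC^{p+1}/I^{p+1}C^{p+1}\big)$ to the unique $f'$ with $f=f'\circ\pi^p$ defines an isomorphism $$ss(I^\bullet C^\bullet)_1^{p,0}\cong C^p(G/N,A^N).$$
   Context: Standing setup: $\mathbf C$ is a topological category (a category with finite limits and a faithful functor $\mathfrak z:\mathbf C\to\mathbf{Set}$ with fully faithful left adjoint $\mathbf F$ commuting with finite limits, such that for every discrete $D$ and all $X,Y$ the map $\mathrm{Hom}(D\times X,Y)\to\mathrm{Hom}_{\mathbf{Set}}(\mathfrak zD,\mathrm{Hom}(X,Y))$ is bijective; $X$ is discrete if $\mathfrak z:\mathrm{Hom}(X,Y)\to\mathrm{Hom}_{\mathbf{Set}}(\mathfrak zX,\mathfrak zY)$ is bijective for all $Y$; $\bullet$ is a point). $G'$ is a group object in $\mathbf C$, $M_1,\dots,M_r$ abelian monoid objects, $G=G'\times\prod_iM_i$. $N'$ is a normal subgroup of $G'$ (a morphism of group objects whose cokernel exists in group objects and has kernel exactly $N'$), $N=N'\times\prod_iM_i^{e'_i}$ with $e'_i\in\{0,1\}$, $\pi:G\to G/N$ its cokernel (with kernel $N$), and there is a section $s:G/N\to G$ in $\mathbf C$ with $\pi\circ s=\mathrm{id}$ whose image contains the neutral element. $(A,h_A)$ is a $G$-module with $\mathbf C$-rigidification: an abelian group $A$ with $\mathfrak zG$-module structure and a functor $h_A:\mathbf C^{\mathrm{op}}\to\mathbf{Set}$ with $h_A(X)$ a subgroup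 of $\mathrm{Hom}_{\mathbf{Set}}(\mathfrak zX,A)$ functorially, $h_A(\mathbf F\bullet)=A$, such that $(g,x)\mapsto g\cdot f(x)$ lies in $h_A(G\times X)$ for $f\in h_A(X)$. $C^n=C^n(G,A)$: $f\in h_A(G^n)$ vanishing whenever an argument is $1$, with differential $\partial f(x_1,\dots,x_{n+1})=x_1f(x_2,\dots,x_{n+1})+\sum_{i=1}^n(-1)^if(\dots,x_ix_{i+1},\dots)+(-1)^{n+1}f(x_1,\dots,x_n)$. $I^jC^n$: the $f\in C^n$ of the form $f'\circ(\mathrm{id}_{G^{n-j}}\times\pi^j)$ with $f'\in h_A(G^{n-j}\times(G/N)^j)$; $I^jC^n=0$ for $j>n$; these are subcomplexes. $ss(I^\bullet C^\bullet)_1^{p,q}=\ker\big(I^pC^{p+q}\xrightarrow{\partial}C^{p+q+1}/I^{p+1}C^{p+q+1}\big)/\big(\partial(I^pC^{p+q-1})+I^{p+1}C^{p+q}\big)$ is the $E_1$-term of the spectral sequence of the filtered complex. $A^N=(A^{\mathfrak zN},h_{A^N})$ with $h_{A^N}(X)=\{f\in h_A(X):f(\mathfrak zX)\subseteq A^{\mathfrak zN}\}$. $C^p(G/N,A^N)$ is the set of $f'\in h_{A^N}((G/N)^p)$ vanishing whenever some argument is the neutral element. *)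

From HB Require Import structures.
From mathcomp Require Import all_boot all_algebra.
Set Implicit Arguments. Unset Strict Implicit. Unset Printing Implicit Defensive.
Import GRing.Theory.
Local Open Scope ring_scope.

(* Topological categories, presented concretely.                            *)
(* An object is a carrier type T (= z X) together with a structure s : st T; *)
(* a morphism X -> Y is a function between carriers that is admissible.     *)
(* Since z is faithful and (being a right adjoint) preserves finite limits,  *)
(* up to equivalence one may take: terminal object = unit, binary product =  *)
(* cartesian product, equalizer = set-theoretic equalizer (subtype).  The    *)
(* fully faithful left adjoint F has unit an iso, so F S = (S, st_disc S)    *)
(* with every function out of it admissible.                                 *)
Record topcat := TopCat {
  st : Type -> Type;
  adm : forall X Y : Type, st X -> st Y -> (X -> Y) -> Prop;
  adm_id : forall X (sX : st X), adm sX sX (fun x => x);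
  adm_comp : forall X Y Z (sX : st X) (sY : st Y) (sZ : st Z) (f : X -> Y) (g : Y -> Z),
     adm sX sY f -> adm sY sZ g -> adm sX sZ (fun x => g (f x));
  st_one : st unit;
  adm_one : forall X (sX : st X), adm sX st_one (fun _ => tt);
  st_prod : forall X Y, st X -> st Y -> st (X * Y);
  adm_fst : forall X Y (sX : st X) (sY : st Y), adm (st_prod sX sY) sX fst;
  adm_snd : forall X Y (sX : st X) (sY : st Y), adm (st_prod sX sY) sY snd;
  adm_pair : forall X Y Z (sX : st X) (sY : st Y) (sZ : st Z) (f : Z -> X) (g : Z -> Y),
     adm sZ sX f -> adm sZ sY g -> adm sZ (st_prod sX sY) (fun z => (f z, g z));
  st_eq : forall X Y (sX : st X) (sY : st Y) (f g : X -> Y),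
     adm sX sY f -> adm sX sY g -> st {x : X | f x = g x};
  adm_sval : forall X Y (sX : st X) (sY : st Y) (f g : X -> Y)
     (af : adm sX sY f) (ag : adm sX sY g),
     adm (st_eq af ag) sX (fun x => proj1_sig x);
  adm_lift : forall X Y Z (sX : st X) (sY : st Y) (sZ : st Z) (f g : X -> Y)
     (af : adm sX sY f) (ag : adm sX sY g) (h : Z -> X) (ah : adm sZ sX h)
     (E : forall z, f (h z) = g (h z)),
     adm sZ (st_eq af ag) (fun z => exist (fun x => f x = g x) (h z) (E z));
  (* the fully faithful left adjoint F of z *)
  st_disc : forall X, st X;
  adm_disc : forall X Y (sY : st Y) (f : X -> Y), adm (st_disc X) sY f;
  (* F commutes with finite limits *)
  disc_one : forall Y (sY : st Y) (f : unit -> Y), adm st_one sY f;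
  disc_prod : forall X1 X2 Y (sY : st Y) (f : X1 * X2 -> Y),
     adm (st_prod (st_disc X1) (st_disc X2)) sY f;
  disc_eq : forall X1 X2 (f g : X1 -> X2) Y (sY : st Y) (h : {x | f x = g x} -> Y),
     adm (st_eq (adm_disc (st_disc X2) f) (adm_disc (st_disc X2) g)) sY h;
  (* for every discrete D: Hom(D x X, Y) -> Hom_Set(zD, Hom(X, Y)) is onto
     (it is injective automatically, morphisms being functions) *)
  adm_exp : forall D X Y (sD : st D) (sX : st X) (sY : st Y) (h : D * X -> Y),
     (forall Z (sZ : st Z) (k : D -> Z), adm sD sZ k) ->
     (forall d, adm sX sY (fun x => h (d, x))) -> adm (st_prod sD sX) sY h
}.

Arguments st_one {t}.
Arguments st_prod {t X Y}.
Arguments st_disc {t}.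
Arguments adm {t X Y}.

Definition discrete (C : topcat) (X : Type) (sX : st C X) :=
  forall Y (sY : st C Y) (f : X -> Y), adm sX sY f.

(* (By faithfulness of z, the diagrams commute iff they do on carriers; the  *)
(* neutral element is a morphism F(pt) -> M, i.e. any element.)              *)
Record monobj (C : topcat) := MonObj {
  mcar : Type;
  mst : st C mcar;
  mmul : mcar -> mcar -> mcar;
  mone : mcar;
  mmul_adm : adm (st_prod mst mst) mst (fun xy => mmul xy.1 xy.2);
  mmulA : associative mmul;
  mmul1l : left_id mone mmul;
  mmul1r : right_id mone mmul
}.

Record grpobj (C : topcat) := GrpObj {
  gbase :> monobj C;
  ginv : mcar gbase -> mcar gbase;
  ginv_adm : adm (mst gbase) (mst gbase) ginv;
  gmulVx : forall x, mmul (ginv x) x = mone gbase;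
  gmulxV : forall x, mmul x (ginv x) = mone gbase
}.

Record amonobj (C : topcat) := AMonObj {
  abase :> monobj C;
  amulC : commutative (@mmul C abase)
}.

Definition mmorph (C : topcat) (M1 M2 : monobj C) (f : mcar M1 -> mcar M2) :=
  [/\ adm (mst M1) (mst M2) f,
      forall x y, f (mmul x y) = mmul (f x) (f y) &
      f (mone M1) = mone M2].

Definition mtriv (C : topcat) : monobj C.
Proof.
refine (@MonObj C unit st_one (fun _ _ => tt) tt _ _ _ _).
- exact: adm_one.
- by move=> ? ? ?.
- by case.
- by case.
Defined.

Definition mprod (C : topcat) (M1 M2 : monobj C) : monobj C.
Proof.
refine (@MonObj C (mcar M1 * mcar M2) (st_prod (mst M1) (mst M2))
  (fun x y => (mmul x.1 y.1, mmul x.2 y.2)) (mone M1, mone M2) _ _ _ _).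
- apply: adm_pair.
  + apply: (adm_comp (g := fun xy => mmul xy.1 xy.2)
        (f := fun xy : (mcar M1 * mcar M2) * (mcar M1 * mcar M2) => (xy.1.1, xy.2.1)));
      last exact: mmul_adm.
    apply: adm_pair.
    * exact: (adm_comp (adm_fst _ _) (adm_fst _ _)).
    * exact: (adm_comp (adm_snd _ _) (adm_fst _ _)).
  + apply: (adm_comp (g := fun xy => mmul xy.1 xy.2)
        (f := fun xy : (mcar M1 * mcar M2) * (mcar M1 * mcar M2) => (xy.1.2, xy.2.2)));
      last exact: mmul_adm.
    apply: adm_pair.
    * exact: (adm_comp (adm_fst _ _) (adm_snd _ _)).
    * exact: (adm_comp (adm_snd _ _) (adm_snd _ _)).
- by move=> x y z; rewrite /= !mmulA.
- by case=> x y; rewrite /= !mmul1l.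
- by case=> x y; rewrite /= !mmul1r.
Defined.

Definition mbig (C : topcat) (Ms : seq (monobj C)) : monobj C :=
  foldr (@mprod C) (mtriv C) Ms.

Definition Gobj (C : topcat) (G' : grpobj C) (Ms : seq (amonobj C)) : monobj C :=
  mprod G' (mbig [seq abase M | M <- Ms]).

(* the factors M_i^{e'_i}  (M_i^1 = M_i, M_i^0 = trivial) *)
Definition selM (C : topcat) (Ms : seq (amonobj C)) (es : seq bool) : seq (monobj C) :=
  [seq (if e.2 then abase e.1 else mtriv C) | e <- zip Ms es].

Definition pickin (C : topcat) (e : bool) (M : amonobj C) :
  mcar (if e then abase M else mtriv C) -> mcar (abase M) :=
  match e as b return mcar (if b then abase M else mtriv C) -> mcar (abase M) with
  | true => fun x => x
  | false => fun _ => mone (abase M)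
  end.

Fixpoint inclM (C : topcat) (Ms : seq (amonobj C)) (es : seq bool) {struct Ms} :
  mcar (mbig (selM Ms es)) -> mcar (mbig [seq abase M | M <- Ms]) :=
  match Ms as Ms0
    return mcar (mbig (selM Ms0 es)) -> mcar (mbig [seq abase M | M <- Ms0]) with
  | [::] => fun _ => tt
  | M :: Ms' =>
    match es as es0
      return mcar (mbig (selM (M :: Ms') es0)) -> mcar (mbig [seq abase M | M <- M :: Ms'])
    with
    | [::] => fun _ => mone (mbig [seq abase M | M <- M :: Ms'])
    | e :: es' => fun x => (@pickin C e M x.1, @inclM C Ms' es' x.2)
    end
  end.

Definition Nobj (C : topcat) (N' : grpobj C) (Ms : seq (amonobj C)) (es : seq bool) :
  monobj C := mprod N' (mbig (selM Ms es)).

Definition Nincl (C : topcat) (N' G' : grpobj C) (iota' : mcar N' -> mcar G')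
  (Ms : seq (amonobj C)) (es : seq bool) :
  mcar (Nobj N' Ms es) -> mcar (Gobj G' Ms) :=
  fun x => (iota' x.1, @inclM C Ms es x.2).

Definition is_mcokernel (C : topcat) (N G Q : monobj C)
  (f : mcar N -> mcar G) (q : mcar G -> mcar Q) :=
  [/\ mmorph q, (forall n, q (f n) = mone Q) &
   forall (H : monobj C) (phi : mcar G -> mcar H), mmorph phi ->
     (forall n, phi (f n) = mone H) ->
     exists psi, [/\ mmorph psi, (forall g, psi (q g) = phi g) &
       forall psi', mmorph psi' -> (forall g, psi' (q g) = phi g) ->
         forall y, psi' y = psi y]].

Definition is_gcokernel (C : topcat) (N G Q : grpobj C)
  (f : mcar N -> mcar G) (q : mcar G -> mcar Q) :=
  [/\ mmorph q, (forall n, q (f n) = mone Q) &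
   forall (H : grpobj C) (phi : mcar G -> mcar H), mmorph phi ->
     (forall n, phi (f n) = mone H) ->
     exists psi, [/\ mmorph psi, (forall g, psi (q g) = phi g) &
       forall psi', mmorph psi' -> (forall g, psi' (q g) = phi g) ->
         forall y, psi' y = psi y]].

(* f : N -> G is the kernel of q : G -> Q (pullback of q along the neutral
   element pt -> Q) *)
Definition is_kernel (C : topcat) (N G Q : monobj C)
  (f : mcar N -> mcar G) (q : mcar G -> mcar Q) :=
  (forall n, q (f n) = mone Q) /\
  forall (Z : Type) (sZ : st C Z) (h : Z -> mcar G), adm sZ (mst G) h ->
    (forall z, q (h z) = mone Q) ->
    exists k, [/\ adm sZ (mst N) k, (forall z, f (k z) = h z) &
      forall k', (forall z, f (k' z) = h z) -> forall z, k' z = k z].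

Definition normal_subgroup (C : topcat) (N' G' : grpobj C) (iota' : mcar N' -> mcar G') :=
  mmorph (M1 := N') (M2 := G') iota' /\
  exists (Q' : grpobj C) (q : mcar G' -> mcar Q'),
    is_gcokernel iota' q /\ is_kernel (N := N') (G := G') (Q := Q') iota' q.

Definition is_module (C : topcat) (G : monobj C) (A : zmodType)
  (act : mcar G -> A -> A) :=
  [/\ forall a, act (mone G) a = a,
      forall g h a, act (mmul g h) a = act g (act h a) &
      forall g a b, act g (a + b) = act g a + act g b].

Definition is_rigidification (C : topcat) (G : monobj C) (A : zmodType)
  (act : mcar G -> A -> A) (hA : forall X : Type, st C X -> (X -> A) -> Prop) :=
  [/\
      forall X (sX : st C X), hA X sX (fun _ => 0),
      forall X (sX : st C X) f g, hA X sX f -> hA X sX g -> hA X sX (fun x => f x - g x),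
      (* functoriality: h_A(u) is precomposition with u *)
      forall X Y (sX : st C X) (sY : st C Y) (u : X -> Y), adm sX sY u ->
        forall f, hA Y sY f -> hA X sX (fun x => f (u x)),
      (* h_A(F pt) = A *)
      forall f : unit -> A, hA unit (st_disc unit) f &
      forall X (sX : st C X) f, hA X sX f ->
        hA (mcar G * X)%type (st_prod (mst G) sX) (fun gx => act gx.1 (f gx.2))].

(* Cochains.  X^n has carrier tup X n = X * (X * ... * unit).  A cochain in  *)
(* C^n is represented by a function on sequences, supported on sequences of  *)
(* length n: f(x_1,...,x_n) is f [:: x_1; ...; x_n].                          *)
Fixpoint tup (X : Type) (n : nat) : Type :=
  match n with 0 => unit | n'.+1 => (X * tup X n')%type end.

Fixpoint pow (C : topcat) (X : Type) (sX : st C X) (n : nat) : st C (tup X n) :=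
  match n with 0 => st_one | n'.+1 => st_prod sX (pow sX n') end.

Fixpoint tup2seq (X : Type) (n : nat) : tup X n -> seq X :=
  match n as n0 return tup X n0 -> seq X with
  | 0 => fun _ => [::]
  | n'.+1 => fun t => t.1 :: @tup2seq X n' t.2
  end.

Fixpoint tmap (X Y : Type) (f : X -> Y) (n : nat) : tup X n -> tup Y n :=
  match n as n0 return tup X n0 -> tup Y n0 with
  | 0 => fun t => t
  | n'.+1 => fun t => (f t.1, @tmap X Y f n' t.2)
  end.

(* merge the entries k and k+1 (0-based): (.., x_k x_{k+1}, ..) *)
Fixpoint mergeat (X : Type) (mul : X -> X -> X) (k : nat) (s : seq X) : seq X :=
  match s, k with
  | x :: (y :: t) as t', 0 => mul x y :: t
  | x :: t, k'.+1 => x :: mergeat mul k' t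
  | _, _ => s
  end.

Definition sgn (A : zmodType) (i : nat) (a : A) : A := if odd i then - a else a.

Section Cochains.
Variables (C : topcat) (G Q : monobj C) (pi : mcar G -> mcar Q).
Variables (A : zmodType) (act : mcar G -> A -> A).
Variable (hA : forall X : Type, st C X -> (X -> A) -> Prop).

Definition cochain (n : nat) (f : seq (mcar G) -> A) :=
  [/\ forall s, size s != n -> f s = 0,
      hA (pow (mst G) n) (fun t => f (tup2seq t)) &
      forall s1 s2, (size s1 + size s2)%N.+1 = n -> f (s1 ++ mone G :: s2) = 0].

Definition dcoch (f : seq (mcar G) -> A) (s : seq (mcar G)) : A :=
  match s with
  | [::] => 0
  | x :: t => act x (f t)
      + \sum_(1 <= i < size s) sgn i (f (mergeat (@mmul C G) i.-1 s))
      + sgn (size s) (f (belast x t))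
  end.

Definition Ifilt (j n : nat) (f : seq (mcar G) -> A) :=
  [/\ cochain n f,
      (n < j)%N -> forall s, f s = 0 &
      (j <= n)%N -> exists f' : (tup (mcar G) (n - j)%N * tup (mcar Q) j)%type -> A,
        hA (st_prod (pow (mst G) (n - j)%N) (pow (mst Q) j)) f' /\
        forall (t1 : tup (mcar G) (n - j)%N) (t2 : tup (mcar G) j),
          f (tup2seq t1 ++ tup2seq t2) = f' (t1, tmap pi t2)].

Definition ss1_num (p q : nat) (f : seq (mcar G) -> A) :=
  Ifilt p (p + q)%N f /\ Ifilt p.+1 (p + q).+1%N (dcoch f).

(* denominator: d(I^p C^{p+q-1}) + I^{p+1} C^{p+q}  (C^{-1} = 0) *)
Definition ss1_den (p q : nat) (f : seq (mcar G) -> A) :=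
  exists g h,
    [/\ (match (p + q)%N with 0 => forall s, g s = 0 | m.+1 => Ifilt p m g end),
        Ifilt p.+1 (p + q)%N h &
        forall s, f s = dcoch g s + h s].
End Cochains.

Definition Ninvariant (C : topcat) (N G : monobj C) (incl : mcar N -> mcar G)
  (A : zmodType) (act : mcar G -> A -> A) (a : A) :=
  forall n, act (incl n) a = a.

Definition cochainQ (C : topcat) (Q : monobj C) (A : zmodType)
  (hA : forall X : Type, st C X -> (X -> A) -> Prop) (inv : A -> Prop)
  (p : nat) (g : seq (mcar Q) -> A) :=
  [/\ forall s, size s != p -> g s = 0,
      hA _ (pow (mst Q) p) (fun t => g (tup2seq t)),
      forall t : tup (mcar Q) p, inv (g (tup2seq t)) &
      forall s1 s2, (size s1 + size s2)%N.+1 = p -> g (s1 ++ mone Q :: s2) = 0].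

From mathcomp Require Import all_boot all_algebra.
From Stdlib Require Import FunctionalExtensionality.
Import GRing.Theory.

Set Implicit Arguments. Unset Strict Implicit. Unset Printing Implicit Defensive.
Local Open Scope ring_scope.

(* For q = 0 the denominator of ss_1^{p,0} vanishes, because I^pC^{p-1} = 0
   and I^{p+1}C^p = 0 (den_zero).  Using the section s of pi, a cochain lies
   in the top filtration step I^nC^n exactly when its value only depends on
   the images of its arguments in G/N (Ifilt_top_iff); hence the numerator
   consists of the p-cochains f such that f and df both descend to G/N
   (numE).  The isomorphism sends f to f o s^p (descend).  It lands in
   C^p(G/N, A^N) because df(n, x_1, ..., x_p) = n.f(x) - f(x) for n in N,
   while df descends and is normalised (num_invariant).  Conversely, for an
   N-invariant cochain g on G/N the differential of g o pi^p descends again,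
   since G acts on A^N through G/N (act_fiber); this gives surjectivity. *)

Section Tuples.
Variable X : Type.

Lemma size_tup2seq n (t : tup X n) : size (tup2seq t) = n.
Proof. by elim: n t => [|n IH] [] //= a r; rewrite IH. Qed.

Lemma tup2seq_inj n (t1 t2 : tup X n) : tup2seq t1 = tup2seq t2 -> t1 = t2.
Proof.
elim: n t1 t2 => [|n IH] [] //=; first by case.
by move=> a r [b r'] [-> /IH ->].
Qed.

Lemma tup2seq_surj n (x : seq X) : size x = n -> exists t : tup X n, tup2seq t = x.
Proof.
elim: n x => [|n IH] [|a x] //= H; try by exists tt.
by case: H => /IH [t <-]; exists (a, t).
Qed.

Lemma tup2seq_tmap (Y : Type) (f : X -> Y) n (t : tup X n) :
  tup2seq (tmap f t) = map f (tup2seq t).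
Proof. by elim: n t => [|n IH] [] //= a r; rewrite IH. Qed.

End Tuples.

Section Admissible.
Variable C : topcat.

Lemma adm_const X Y (sX : st C X) (sY : st C Y) (c : Y) : adm sX sY (fun _ => c).
Proof. exact: (adm_comp (adm_one sX) (disc_one sY (fun _ => c))). Qed.

Lemma adm_tmap X Y (sX : st C X) (sY : st C Y) (f : X -> Y) n :
  adm sX sY f -> adm (pow sX n) (pow sY n) (@tmap X Y f n).
Proof.
move=> af; elim: n => [|n IH] /=; first exact: adm_id.
apply: adm_pair; first exact: (adm_comp (adm_fst _ _) af).
exact: (adm_comp (adm_snd _ _) IH).
Qed.

End Admissible.

Section Faces.
Variables (X : Type) (mul : X -> X -> X).

Fixpoint mergetup (n : nat) : nat -> tup X n.+1 -> tup X n :=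
  match n return nat -> tup X n.+1 -> tup X n with
  | 0 => fun _ _ => tt
  | n'.+1 => fun k t => match k with
     | 0 => (mul t.1 t.2.1, t.2.2)
     | k'.+1 => (t.1, @mergetup n' k' t.2) end
  end.

Fixpoint droptup (n : nat) : tup X n.+1 -> tup X n :=
  match n return tup X n.+1 -> tup X n with
  | 0 => fun _ => tt
  | n'.+1 => fun t => (t.1, @droptup n' t.2)
  end.

Lemma mergetupE n k (t : tup X n.+1) : (k < n)%N ->
  tup2seq (mergetup k t) = mergeat mul k (tup2seq t).
Proof. by elim: n k t => [|n IH] [|k] // [a [b r]] //= Hk; rewrite IH. Qed.

Lemma droptupE n (t : tup X n.+1) : tup2seq (droptup t) = belast t.1 (tup2seq t.2).
Proof. by elim: n t => [|n IH] [a t] //; case: t => b r; rewrite /= -(IH (b, r)). Qed.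

Lemma mergeatS k (x : X) t : mergeat mul k.+1 (x :: t) = x :: mergeat mul k t.
Proof. by case: t. Qed.

Lemma mergeat_catR k (s1 s2 : seq X) : (size s1 <= k)%N ->
  mergeat mul k (s1 ++ s2) = s1 ++ mergeat mul (k - size s1) s2.
Proof. by elim: s1 k => [|x s1 IH] [|k] // H; rewrite cat_cons mergeatS IH. Qed.

Lemma mergeat_catL k (s1 s2 : seq X) : (k.+1 < size s1)%N ->
  mergeat mul k (s1 ++ s2) = mergeat mul k s1 ++ s2.
Proof.
elim: s1 k => [|x s1 IH] [|k] //; first by case: s1 IH.
by move=> H; rewrite cat_cons !mergeatS IH.
Qed.

Lemma size_mergeat k (s : seq X) : (k.+1 < size s)%N ->
  size (mergeat mul k s) = (size s).-1.
Proof.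
elim: s k => [|x s IH] [|k] //; first by case: s IH.
by move=> H; rewrite mergeatS /= IH //; case: s H IH.
Qed.

Lemma belast_cat1 (x : X) s y t : belast x (s ++ y :: t) = x :: s ++ belast y t.
Proof. by elim: s x => [|z s IH] x //=; rewrite IH. Qed.

End Faces.

Lemma map_mergeat (X Y : Type) (mulX : X -> X -> X) (mulY : Y -> Y -> Y)
  (g : X -> Y) k s :
  (forall a b, g (mulX a b) = mulY (g a) (g b)) ->
  map g (mergeat mulX k s) = mergeat mulY k (map g s).
Proof.
move=> Hg; elim: s k => [|x s IH] [|k] //; first by case: s IH => //= y s _; rewrite Hg.
by rewrite mergeatS map_cons mergeatS IH.
Qed.

Section AdmissibleFaces.
Variables (C : topcat) (G : monobj C).

Lemma adm_mergetup n k :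
  adm (pow (mst G) n.+1) (pow (mst G) n) (@mergetup _ (@mmul C G) n k).
Proof.
elim: n k => [|n IH] [|k] /=; try exact: adm_one.
- apply: adm_pair; last exact: (adm_comp (adm_snd _ _) (adm_snd _ _)).
  exact: (adm_comp (g := fun xy : mcar G * mcar G => mmul xy.1 xy.2)
    (adm_pair (adm_fst _ _) (adm_comp (adm_snd _ _) (adm_fst _ _))) (mmul_adm G)).
- apply: adm_pair; first exact: adm_fst.
  exact: (adm_comp (adm_snd _ _) (IH k)).
Qed.

Lemma adm_droptup n : adm (pow (mst G) n.+1) (pow (mst G) n) (@droptup (mcar G) n).
Proof.
elim: n => [|n IH] /=; first exact: adm_one.
apply: adm_pair; first exact: adm_fst.
exact: (adm_comp (adm_snd _ _) IH).
Qed.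

End AdmissibleFaces.

Section Subgroups.
Variables (C : topcat) (A : zmodType) (hA : forall X : Type, st C X -> (X -> A) -> Prop).
Hypothesis h0 : forall X (sX : st C X), hA sX (fun _ => 0).
Hypothesis hB : forall X (sX : st C X) f g, hA sX f -> hA sX g -> hA sX (fun x => f x - g x).

Lemma hA_ext X (sX : st C X) f g : f =1 g -> hA sX f -> hA sX g.
Proof. by move=> /functional_extensionality ->. Qed.

Lemma hA_opp X (sX : st C X) f : hA sX f -> hA sX (fun x => - f x).
Proof. by move=> hf; apply: hA_ext (hB (h0 sX) hf) => x; rewrite sub0r. Qed.

Lemma hA_add X (sX : st C X) f g : hA sX f -> hA sX g -> hA sX (fun x => f x + g x).
Proof. by move=> hf hg; apply: hA_ext (hB hf (hA_opp hg)) => x; rewrite opprK. Qed.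

Lemma hA_sgn X (sX : st C X) i f : hA sX f -> hA sX (fun x => sgn i (f x)).
Proof. by rewrite /sgn; case: (odd i) => // /hA_opp. Qed.

Lemma hA_sum X (sX : st C X) (r : seq nat) (F : nat -> X -> A) :
  (forall i, hA sX (F i)) -> hA sX (fun x => \sum_(i <- r) F i x).
Proof.
move=> hF; elim: r => [|i r IH]; first by apply: hA_ext (h0 sX) => x; rewrite big_nil.
by apply: hA_ext (hA_add (hF i) IH) => x; rewrite big_cons.
Qed.

End Subgroups.

Lemma sum_delta (A : zmodType) (a b j : nat) (c : A) :
  \sum_(a <= i < b) (if i == j then c else 0) = if (a <= j < b)%N then c else 0.
Proof.
rewrite -big_mkcond big_const_seq.
have -> : count (fun i => i == j) (index_iota a b) = (a <= j < b)%N.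
  have := count_uniq_mem j (iota_uniq a (b - a)).
  by rewrite -/(index_iota a b) mem_index_iota => <-; apply: eq_count.
by case: (a <= j < b)%N => /=; rewrite ?addr0.
Qed.

Section Differential.
Variables (C : topcat) (G : monobj C) (A : zmodType) (act : mcar G -> A -> A).
Variable (hA : forall X : Type, st C X -> (X -> A) -> Prop).
Hypothesis HA : is_module act.
Hypothesis HhA : is_rigidification act hA.

Lemma act0 g : act g 0 = 0.
Proof.
case: HA => _ _ Hadd; have := Hadd g 0 0; rewrite addr0 => H.
by apply: (addrI (act g 0)); rewrite addr0 -H.
Qed.

Lemma sgn0 i : sgn i (0 : A) = 0.
Proof. by rewrite /sgn; case: odd; rewrite ?oppr0. Qed.

Lemma sgnSK i (a : A) : sgn i a + sgn i.+1 a = 0.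
Proof. by rewrite /sgn /=; case: (odd i) => /=; rewrite ?subrr ?addNr. Qed.

Lemma dcochE (f : seq (mcar G) -> A) x t : dcoch act f (x :: t) =
  act x (f t) + \sum_(1 <= i < (size t).+1) sgn i (f (mergeat (@mmul C G) i.-1 (x :: t)))
  + sgn (size t).+1 (f (belast x t)).
Proof. by []. Qed.

Lemma dcoch_zero (f : seq (mcar G) -> A) : f =1 (fun _ => 0) -> dcoch act f =1 (fun _ => 0).
Proof.
move=> Hf [|x t] //; rewrite dcochE !Hf act0 sgn0 add0r addr0.
by rewrite big1 // => i _; rewrite Hf sgn0.
Qed.

Section Cochain.
Variables (n : nat) (f : seq (mcar G) -> A).
Hypothesis fcoch : cochain hA n f.

Lemma cochain_normal s1 s2 : f (s1 ++ mone G :: s2) = 0.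
Proof.
case: fcoch => fsupp _ fnorm.
case: (eqVneq (size s1 + size s2).+1 n) => [/fnorm //|H].
by apply: fsupp; rewrite size_cat /= addnS.
Qed.

Lemma dcoch_supp s : size s != n.+1 -> dcoch act f s = 0.
Proof.
case: fcoch => fsupp _ _; case: s => [|x t] // Ht.
rewrite dcochE fsupp // act0 add0r fsupp ?size_belast // sgn0 addr0.
rewrite big_nat_cond big1 // => i /andP [/andP [Hi1 Hi2] _].
by rewrite fsupp ?sgn0 // size_mergeat /= ?prednK.
Qed.

Lemma dcoch_term s1 s2 i : (0 < i < size (s1 ++ mone G :: s2))%N ->
  sgn i (f (mergeat (@mmul C G) i.-1 (s1 ++ mone G :: s2))) =
  (if i == size s1 then sgn (size s1) (f (s1 ++ s2)) else 0) +
  (if i == (size s1).+1 then sgn (size s1).+1 (f (s1 ++ s2)) else 0).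
Proof.
case/andP=> Hi1 HiN; case: (ltngtP i (size s1)) => Hij.
- rewrite mergeat_catL ?prednK // cochain_normal sgn0 add0r ifF //.
  by apply/negbTE; rewrite neq_ltn ltnS ltnW.
- rewrite add0r; case: (eqVneq i (size s1).+1) => Hi.
  + subst i; rewrite /= mergeat_catR // subnn.
    move: HiN; rewrite size_cat /=.
    case: s2 => [|y s2]; first by rewrite addn1 ltnn.
    by rewrite /= mmul1l.
  + have Hk : (size s1 < i.-1)%N by rewrite -ltnS prednK // ltn_neqAle eq_sym Hi Hij.
    rewrite mergeat_catR; last exact: ltnW.
    by rewrite -subnSK // mergeatS cochain_normal sgn0.
- subst i; rewrite ifF ?addr0; last by rewrite eqn_leq ltnn andbF.
  move: Hi1; case: (lastP s1) => [|s1' x] //= _.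
  by rewrite size_rcons /= !cat_rcons mergeat_catR // subnn /= mmul1r.
Qed.

(* df is normalised: in df(s1, 1, s2) only the two faces involving the
   neutral entry and the outer terms meeting it survive, and they cancel. *)
Lemma dcoch_normal s1 s2 : dcoch act f (s1 ++ mone G :: s2) = 0.
Proof.
case: HA => act1 _ _.
have Hj : (size s1 < size (s1 ++ mone G :: s2))%N.
  by rewrite size_cat /= addnS ltnS leq_addr.
have Hsum := eq_big_nat 0 +%R (@dcoch_term s1 s2).
rewrite big_split /= !sum_delta Hj andbT /= in Hsum.
case E: (s1 ++ mone G :: s2) Hsum Hj => [|x t]; first by case: s1 E.
rewrite dcochE /= => -> _.
case: s1 E => [|x1 s1'] /= [<- <-].
- rewrite act1; case: s2 => [|y s2] /=; first by rewrite !addr0 /sgn /= subrr.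
  rewrite -[mone G :: _]cat0s cochain_normal sgn0 !addr0 add0r.
  by rewrite /sgn /= subrr.
- rewrite -[x1 :: _]cat0s cochain_normal act0 add0r belast_cat1.
  case: s2 => [|y s2] /=.
    by rewrite cats0 size_cat /= addn1 ltnn addr0 sgnSK.
  have := cochain_normal (x1 :: s1') (belast y s2); rewrite cat_cons => ->.
  by rewrite sgn0 addr0 size_cat /= !ltnS !addnS !ltnS leq_addr sgnSK.
Qed.

(* On tuples, df is a sum of the action term and of f composed with the
   (admissible) face maps, so it inherits the rigidification of f. *)
Lemma dcoch_hA : hA (pow (mst G) n.+1) (fun t => dcoch act f (tup2seq t)).
Proof.
case: HhA => h0 hB hF _ hact; case: fcoch => _ Hf _.
apply: (hA_ext (f := fun t => act t.1 (f (tup2seq t.2)) +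
   \sum_(i <- index_iota 1 n.+1) sgn i (f (tup2seq (mergetup (@mmul C G) i.-1 t))) +
   sgn n.+1 (f (tup2seq (droptup t))))).
  case=> x t; rewrite [tup2seq _]/= dcochE size_tup2seq droptupE.
  congr (_ + _ + _); apply: eq_big_nat => i /andP [Hi1 Hi2].
  by rewrite mergetupE // -ltnS prednK.
apply: (hA_add h0 hB); last exact: (hA_sgn h0 hB) (hF _ _ _ _ _ (adm_droptup G n) _ Hf).
apply: (hA_add h0 hB); first exact: (hact _ _ _ Hf).
apply: (hA_sum h0 hB) => i; apply: (hA_sgn h0 hB).
exact: (hF _ _ _ _ _ (adm_mergetup G n i.-1) _ Hf).
Qed.

Lemma dcoch_cochain : cochain hA n.+1 (dcoch act f).
Proof. by split; [exact: dcoch_supp | exact: dcoch_hA | move=> *; exact: dcoch_normal]. Qed.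

End Cochain.
End Differential.

Section Filtration.
Variables (C : topcat) (G Q : monobj C) (pi : mcar G -> mcar Q).
Variables (A : zmodType) (act : mcar G -> A -> A).
Variable (hA : forall X : Type, st C X -> (X -> A) -> Prop).
Hypothesis HA : is_module act.
Hypothesis HhA : is_rigidification act hA.

Definition descends (f : seq (mcar G) -> A) :=
  forall x1 x2, map pi x1 = map pi x2 -> f x1 = f x2.

Lemma cochain_zero n (f : seq (mcar G) -> A) : f =1 (fun _ => 0) -> cochain hA n f.
Proof.
case: HhA => h0 _ _ _ _ Hf; split=> [s _|| s1 s2 _]; rewrite ?Hf //.
by apply: hA_ext (h0 _ _) => t; rewrite Hf.
Qed.

Lemma Ifilt_zero j n : Ifilt pi hA j n (fun _ => 0).
Proof.
case: HhA => h0 _ _ _ _.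
by split=> [|//|_]; [apply: cochain_zero | exists (fun _ => 0)].
Qed.

Lemma den_zero p f : ss1_den pi act hA p 0 f <-> f =1 (fun _ => 0).
Proof.
split=> [[g [h [Hg [_ Hh _] Hf]]] x|Hf].
  have Hg0 : g =1 (fun _ => 0).
    by move: Hg; rewrite addn0; case: (p) => [|m] // [_ /(_ (ltnSn m))].
  by rewrite Hf dcoch_zero // add0r Hh // addn0.
exists (fun _ => 0), (fun _ => 0); split; last by move=> x; rewrite Hf dcoch_zero // addr0.
  by case: (p + 0)%N => [|m] //; exact: Ifilt_zero.
exact: Ifilt_zero.
Qed.

Lemma Ifilt_top_descends n f : Ifilt pi hA n n f -> descends f.
Proof.
case=> [[fsupp _ _] _ /(_ (leqnn n))]; rewrite subnn => [[f' [_ E]]] x1 x2 Hm.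
have Hsz : size x2 = size x1 by rewrite -(size_map pi x2) -Hm size_map.
case: (eqVneq (size x1) n) => H1; last by rewrite !fsupp ?Hsz.
have [t1 E1] := tup2seq_surj H1; have [t2 E2] := tup2seq_surj (etrans Hsz H1).
rewrite -E1 -E2 -[tup2seq t1]cat0s -[tup2seq t2]cat0s !(E tt); congr f'; congr pair.
by apply: tup2seq_inj; rewrite !tup2seq_tmap E1 E2.
Qed.

End Filtration.

Section Descent.
Variables (C : topcat) (G Q : monobj C) (pi : mcar G -> mcar Q) (s : mcar Q -> mcar G).
Variables (A : zmodType) (act : mcar G -> A -> A).
Variable (hA : forall X : Type, st C X -> (X -> A) -> Prop).
Hypothesis Hpi : mmorph (M1 := G) (M2 := Q) pi.
Hypothesis Hs_adm : adm (mst Q) (mst G) s.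
Hypothesis Hs : forall q, pi (s q) = q.
Hypothesis HA : is_module act.
Hypothesis HhA : is_rigidification act hA.

Lemma map_pi_section y : map pi (map s y) = y.
Proof. by elim: y => //= a y ->; rewrite Hs. Qed.

(* I^nC^n consists of the n-cochains that descend to Q: the factorisation
   through pi^n is f o s^n, which is rigidified because s is a morphism. *)
Lemma Ifilt_top_iff n f : Ifilt pi hA n n f <-> cochain hA n f /\ descends pi f.
Proof.
split=> [Hf|[fcoch fdesc]].
  by split; [case: Hf | exact: (Ifilt_top_descends Hf)].
split=> //; first by rewrite ltnn.
move=> _; rewrite subnn; exists (fun z => f (tup2seq (tmap s z.2))); split.
  case: HhA fcoch => _ _ hF _ _ [_ Hf _].
  exact: (hF _ _ _ _ _ (adm_comp (adm_snd _ _) (adm_tmap n Hs_adm)) _ Hf).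
by move=> [] t /=; apply: fdesc; rewrite !tup2seq_tmap map_pi_section.
Qed.

Variable p : nat.
Local Notation num := (ss1_num pi act hA p 0).

Lemma numE f : num f <-> [/\ cochain hA p f, descends pi f & descends pi (dcoch act f)].
Proof.
rewrite /ss1_num addn0.
split=> [[/Ifilt_top_iff [? ?] /Ifilt_top_iff [_ ?]] // | [fcoch ? ?]].
by split; apply/Ifilt_top_iff; split=> //; exact: dcoch_cochain.
Qed.

Lemma num_zero f : f =1 (fun _ => 0) -> num f.
Proof.
move=> Hf; apply/numE; split; first exact: (cochain_zero HhA).
  by move=> x1 x2 _; rewrite !Hf.
by move=> x1 x2 _; rewrite !dcoch_zero.
Qed.

Definition descend (f : seq (mcar G) -> A) (y : seq (mcar Q)) : A :=
  if size y == p then f (map s y) else 0.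

Definition lift (g : seq (mcar Q) -> A) (x : seq (mcar G)) : A :=
  if size x == p then g (map pi x) else 0.

Lemma descend_supp f y : size y != p -> descend f y = 0.
Proof. by rewrite /descend => /negbTE ->. Qed.

Lemma descend_sub f g y : descend (fun x => f x - g x) y = descend f y - descend g y.
Proof. by rewrite /descend; case: eqP; rewrite ?subr0. Qed.

Lemma descend_unique f (f' : seq (mcar Q) -> A) :
  (forall y, size y != p -> f' y = 0) -> (forall x, size x = p -> f x = f' (map pi x)) ->
  forall y, f' y = descend f y.
Proof.
move=> f'supp f'fact y; rewrite /descend; case: eqP => [Hy|/eqP Hy]; last exact: f'supp.
by rewrite f'fact ?map_pi_section // size_map.
Qed.

Lemma descend_factor f : descends pi f -> forall x, size x = p -> f x = descend f (map pi x).
Proof.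
move=> fdesc x Hx; rewrite /descend size_map Hx eqxx.
by apply: fdesc; rewrite map_pi_section.
Qed.

Lemma descend_eq0 f : cochain hA p f -> descends pi f ->
  descend f =1 (fun _ => 0) <-> f =1 (fun _ => 0).
Proof.
move=> [fsupp _ _] fdesc; split=> Hf x; last by rewrite /descend Hf; case: eqP.
case: (eqVneq (size x) p) => Hx; last exact: fsupp.
by rewrite (descend_factor fdesc Hx) Hf.
Qed.

(* descend f is rigidified because s is a morphism. *)
Lemma descend_rigid f : cochain hA p f -> hA (pow (mst Q) p) (fun t => descend f (tup2seq t)).
Proof.
case: HhA => _ _ hF _ _ [_ fhA _].
apply: hA_ext (hF _ _ _ _ _ (adm_tmap p Hs_adm) _ fhA) => t.
by rewrite /descend size_tup2seq eqxx tup2seq_tmap.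
Qed.

(* descend f is normalised because s(1) and 1 have the same image in Q. *)
Lemma descend_normal f : cochain hA p f -> descends pi f ->
  forall s1 s2, descend f (s1 ++ mone Q :: s2) = 0.
Proof.
case: Hpi => _ _ pi1 fcoch fdesc s1 s2; rewrite /descend.
case: eqP => _ //; rewrite map_cat /= (fdesc _ (map s s1 ++ mone G :: map s s2)).
  exact: cochain_normal fcoch _ _.
by rewrite !map_cat /= Hs pi1.
Qed.

Lemma lift_descends g : descends pi (lift g).
Proof. by move=> x1 x2 E; rewrite /lift -(size_map pi x1) -(size_map pi x2) E. Qed.

Lemma lift_cochain (inv : A -> Prop) g : cochainQ hA inv p g -> cochain hA p (lift g).
Proof.
case=> _ ghA _ gnorm; case: HhA => _ _ hF _ _; case: Hpi => pi_adm _ pi1; split.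
- by move=> x /negbTE Hx; rewrite /lift Hx.
- apply: hA_ext (hF _ _ _ _ _ (adm_tmap p pi_adm) _ ghA) => t.
  by rewrite /lift size_tup2seq eqxx tup2seq_tmap.
- move=> s1 s2 H; rewrite /lift size_cat /= addnS H eqxx map_cat /= pi1.
  by apply: gnorm; rewrite !size_map.
Qed.

Lemma descend_lift (inv : A -> Prop) g : cochainQ hA inv p g -> descend (lift g) =1 g.
Proof.
case=> gsupp _ _ _ y; rewrite /descend /lift size_map.
case: eqP => [_|/eqP Hy]; first by rewrite map_pi_section.
by rewrite gsupp.
Qed.

End Descent.

(* Decomposition of prod_i M_i along the factors selected by es: every
   m is killM m (the selected factors set to 1) times the inclusion of
   selpart m (its selected factors). *)
Section Selection.
Variable C : topcat.
Local Unset Implicit Arguments.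

Definition pickout (e : bool) (M : amonobj C) :
  mcar (abase M) -> mcar (if e then abase M else mtriv C) :=
  match e as b return mcar (abase M) -> mcar (if b then abase M else mtriv C) with
  | true => fun x => x
  | false => fun _ => tt
  end.

Fixpoint killM (Ms : seq (amonobj C)) (es : seq bool) {struct Ms} :
  mcar (mbig [seq abase M | M <- Ms]) -> mcar (mbig [seq abase M | M <- Ms]) :=
  match Ms as Ms0 return
    mcar (mbig [seq abase M | M <- Ms0]) -> mcar (mbig [seq abase M | M <- Ms0]) with
  | [::] => fun x => x
  | M :: Ms' => match es with
    | [::] => fun x => x
    | e :: es' => fun x => ((if e then mone (abase M) else x.1), @killM Ms' es' x.2)
    end
  end.

Fixpoint selpart (Ms : seq (amonobj C)) (es : seq bool) {struct Ms} :
  mcar (mbig [seq abase M | M <- Ms]) -> mcar (mbig (selM Ms es)) :=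
  match Ms as Ms0 return
    mcar (mbig [seq abase M | M <- Ms0]) -> mcar (mbig (selM Ms0 es)) with
  | [::] => match es as es0 return
      mcar (mbig [seq abase M | M <- [::]]) -> mcar (mbig (selM [::] es0)) with
    | [::] => fun _ => tt
    | _ :: _ => fun _ => tt
    end
  | M :: Ms' => match es as es0 return
      mcar (mbig [seq abase M | M <- M :: Ms']) -> mcar (mbig (selM (M :: Ms') es0)) with
    | [::] => fun _ => tt
    | e :: es' => fun x => (@pickout e M x.1, @selpart Ms' es' x.2)
    end
  end.

Lemma kill_dec Ms es m : mmul (killM Ms es m) (@inclM C Ms es (selpart Ms es m)) = m.
Proof.
elim: Ms es m => [|M Ms IH] [|e es] /=; try by case.
- by case=> m1 m2 /=; rewrite !mmul1r.
- by case=> m1 m2 /=; rewrite IH; case: e => /=; rewrite ?mmul1l ?mmul1r.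
Qed.

Lemma kill_incl Ms es n : killM Ms es (@inclM C Ms es n) = mone _.
Proof. by elim: Ms es n => [|M Ms IH] [|e es] //= [n1 n2] /=; rewrite IH; case: e n1. Qed.

Lemma incl_one Ms es : @inclM C Ms es (mone _) = mone _.
Proof. by elim: Ms es => [|M Ms IH] [|e es] //=; rewrite IH; case: e. Qed.

Lemma kill_mmorph Ms es :
  mmorph (M1 := mbig [seq abase M | M <- Ms]) (M2 := mbig [seq abase M | M <- Ms])
    (killM Ms es).
Proof.
split.
- elim: Ms es => [|M Ms IH] [|e es] /=; try exact: adm_id.
  apply: adm_pair; last exact: (adm_comp (adm_snd _ _) (IH es)).
  by case: e; [exact: adm_const | exact: adm_fst].
- elim: Ms es => [|M Ms IH] [|e es] //= [x1 x2] [y1 y2] /=.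
  by rewrite IH; case: e; rewrite ?mmul1l.
- by elim: Ms es => [|M Ms IH] [|e es] //=; rewrite IH; case: e.
Qed.

End Selection.

Arguments killM {C} Ms es _.
Arguments selpart {C} Ms es _.

Section ActionThroughQuotient.
Variables (C : topcat) (G' N' : grpobj C) (iota' : mcar N' -> mcar G').
Variables (Ms : seq (amonobj C)) (es : seq bool) (Q : monobj C).
Variables (pi : mcar (Gobj G' Ms) -> mcar Q) (A : zmodType).
Variable (act : mcar (Gobj G' Ms) -> A -> A).
Hypothesis Hcok : is_mcokernel (@Nincl C N' G' iota' Ms es) pi.
Hypothesis HA : is_module act.

Local Notation GG := (Gobj G' Ms).
Local Notation Ninc := (@Nincl C N' G' iota' Ms es).

Variable a : A.
Hypothesis Ha : forall n, act (Ninc n) a = a.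

Lemma act_kill (Hiota1 : iota' (mone N') = mone G') g m :
  act ((g, m) : mcar GG) a = act ((g, killM Ms es m) : mcar GG) a.
Proof.
case: HA => _ HAmul _.
have -> : ((g, m) : mcar GG) =
    mmul (m := GG) (g, killM Ms es m) (Ninc (mone N', selpart Ms es m)).
  by rewrite /Nincl /= Hiota1 mmul1r kill_dec.
by rewrite HAmul Ha.
Qed.

Section KernelOfQ.
Variables (Q' : grpobj C) (q : mcar G' -> mcar Q').
Hypothesis Hq : mmorph (M1 := G') (M2 := Q') q.
Hypothesis Hq_iota : forall n, q (iota' n) = mone Q'.
Hypothesis Hq_ker : is_kernel (N := N') (G := G') (Q := Q') iota' q.

(* (q, killM) : G -> Q' x prod_i M_i is a morphism killing N, hence it
   factors through the cokernel pi. *)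
Lemma pi_eq_kill x x' : pi x = pi x' ->
  q x.1 = q x'.1 /\ killM Ms es x.2 = killM Ms es x'.2.
Proof.
case: Hcok => _ _ Huniv; case: Hq => Hqadm Hqmul Hq1.
have [kadm kmul k1] := kill_mmorph C Ms es.
pose H := mprod (gbase Q') (mbig [seq abase M | M <- Ms]).
pose phi := fun x : mcar GG => ((q x.1, killM Ms es x.2) : mcar H).
have Hphi : mmorph (M1 := GG) (M2 := H) phi.
  split.
  - exact: (adm_pair (adm_comp (adm_fst _ _) Hqadm) (adm_comp (adm_snd _ _) kadm)).
  - by case=> [x1 x2] [y1 y2]; rewrite /phi /= Hqmul kmul.
  - by rewrite /phi /= Hq1 k1.
have HphiN : forall n, phi (Ninc n) = mone H.
  by case=> n1 n2; rewrite /phi /= Hq_iota kill_incl.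
have [psi [_ Hpsi _]] := Huniv H phi Hphi HphiN.
by move=> Hx; have [] : phi x = phi x' by rewrite -!Hpsi Hx.
Qed.

(* Elements of G' with the same image under q differ by an element of N'. *)
Lemma act_fiber_q g g' m : q g = q g' ->
  act ((g, m) : mcar GG) a = act ((g', m) : mcar GG) a.
Proof.
case: Hq => _ Hqmul Hq1; case: HA => _ HAmul _; case: Hq_ker => _ Hker Hg.
have Hh : forall z : unit, q ((fun _ => mmul (ginv g) g') z) = mone Q'.
  by move=> _ /=; rewrite Hqmul -Hg -Hqmul gmulVx Hq1.
have [k [_ Hk _]] := Hker unit (st_disc unit) _ (adm_disc _ _) Hh.
have -> : ((g', m) : mcar GG) = mmul (m := GG) (g, m) (Ninc (k tt, mone _)).
  by rewrite /Nincl /= incl_one mmul1r Hk mmulA gmulxV mmul1l.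
by rewrite HAmul Ha.
Qed.

End KernelOfQ.

(* The normality of N' provides such a q. *)
Lemma act_fiber (HN' : normal_subgroup iota') x x' : pi x = pi x' -> act x a = act x' a.
Proof.
case: HN' => [[_ _ Hiota1] [Q' [q [[Hq Hq_iota _] Hq_ker]]]].
case: x x' => [g m] [g' m'] /(pi_eq_kill Hq Hq_iota) [Hg Hm].
by rewrite act_kill // [in RHS]act_kill // Hm (act_fiber_q Hq Hq_ker _ Hg).
Qed.

End ActionThroughQuotient.

Section Isomorphism.
Variables (C : topcat) (G' : grpobj C) (Ms : seq (amonobj C)).
Variables (N' : grpobj C) (iota' : mcar N' -> mcar G') (es : seq bool).
Variables (Q : monobj C) (pi : mcar (Gobj G' Ms) -> mcar Q).
Variable (s : mcar Q -> mcar (Gobj G' Ms)).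
Variables (A : zmodType) (act : mcar (Gobj G' Ms) -> A -> A).
Variable (hA : forall X : Type, st C X -> (X -> A) -> Prop).
Hypothesis HN' : normal_subgroup iota'.
Hypothesis Hcok : is_mcokernel (@Nincl C N' G' iota' Ms es) pi.
Hypothesis Hs_adm : adm (mst Q) (mst (Gobj G' Ms)) s.
Hypothesis Hs : forall q, pi (s q) = q.
Hypothesis HA : is_module act.
Hypothesis HhA : is_rigidification act hA.
Variable p : nat.

Local Notation GG := (Gobj G' Ms).
Local Notation Ninc := (@Nincl C N' G' iota' Ms es).
Local Notation num := (ss1_num pi act hA p 0).
Local Notation AN := (Ninvariant Ninc act).

Lemma pi_mmorph : mmorph (M1 := GG) (M2 := Q) pi. Proof. by case: Hcok. Qed.
Lemma pi_N n : pi (Ninc n) = mone Q. Proof. by case: Hcok. Qed.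

Local Notation numE := (numE Hs_adm Hs HA HhA).

(* The values of f are N-invariant: df(n, y) = n.f(y) - f(y) since f
   vanishes on sequences starting with an element of N, while
   df(n, y) = df(1, y) = 0 because df descends and is normalised. *)
Lemma num_invariant f : num f -> forall y n, act (Ninc n) (f y) = f y.
Proof.
case/numE => fcoch fdesc ddesc y n; case: pi_mmorph => _ pi_mul pi1.
case: (eqVneq (size y) p) => [Hy|Hy]; last by case: fcoch => fsupp _ _; rewrite fsupp ?act0.
have pi_n z : map pi (Ninc n :: z) = map pi (mone GG :: z) by rewrite /= pi_N pi1.
have fN z : f (Ninc n :: z) = 0.
  by rewrite (fdesc _ _ (pi_n z)) -[mone GG :: z]cat0s (cochain_normal fcoch).
have : dcoch act f (Ninc n :: y) = 0.
  rewrite (ddesc _ _ (pi_n y)) -[mone GG :: y]cat0s.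
  exact: (cochain_normal (dcoch_cochain HA HhA fcoch)).
rewrite dcochE; case: y Hy => [|y1 y'] Hy /=.
  by rewrite big_geq // addr0 /sgn /= => /eqP; rewrite subr_eq0 => /eqP.
rewrite fN sgn0 addr0 big_ltn // big_nat_cond big1; last first.
  by move=> [|[|i]] // _; rewrite [i.+2.-1]/= mergeatS fN sgn0.
rewrite addr0 /sgn /= (fdesc (mmul (Ninc n) y1 :: y') (y1 :: y')).
  by move=> /eqP; rewrite subr_eq0 => /eqP.
by rewrite !map_cons pi_mul pi_N mmul1l.
Qed.

Lemma descend_cochainQ f : num f -> cochainQ hA AN p (descend s p f).
Proof.
move=> Kf; have /numE [fcoch fdesc _] := Kf; split.
- exact: descend_supp.
- exact: (descend_rigid Hs_adm HhA fcoch).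
- by move=> t n; rewrite /descend size_tup2seq eqxx num_invariant.
- by move=> s1 s2 _; exact: (descend_normal pi_mmorph Hs fcoch fdesc).
Qed.

Lemma dcoch_descends f : descends pi f -> (forall x n, act (Ninc n) (f x) = f x) ->
  descends pi (dcoch act f).
Proof.
case: pi_mmorph => _ pi_mul _ fdesc finv [|a t] [|b u] // [Hab Htu].
have Hsz : size t = size u by rewrite -(size_map pi t) Htu size_map.
rewrite !dcochE Hsz; congr (_ + _ + _).
- by rewrite (fdesc _ _ Htu); exact: (act_fiber Hcok HA (finv u) HN' Hab).
- apply: eq_bigr => i _; congr sgn; apply: fdesc.
  by rewrite !(map_mergeat _ _ pi_mul) /= Hab Htu.
- by congr sgn; apply: fdesc; rewrite -!belast_map Hab Htu.
Qed.

(* The lift g o pi^p of g in C^p(G/N, A^N) lies in the numerator: its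
   differential descends because g takes N-invariant values. *)
Lemma lift_num g : cochainQ hA AN p g -> num (lift pi p g).
Proof.
move=> gcoch; apply/numE; split; first exact: (lift_cochain pi_mmorph HhA gcoch).
  exact: lift_descends.
apply: dcoch_descends; first exact: lift_descends.
case: gcoch => _ _ ginv _ x n; rewrite /lift; case: eqP => Hx; last exact: act0.
by have [t <-] := tup2seq_surj (etrans (size_map pi x) Hx); exact: ginv.
Qed.

End Isomorphism.

Theorem proposition10p11
  (C : topcat)
  (G' : grpobj C) (Ms : seq (amonobj C))
  (N' : grpobj C) (iota' : mcar N' -> mcar G') (es : seq bool)
  (Q : monobj C) (pi : mcar (Gobj G' Ms) -> mcar Q) (s : mcar Q -> mcar (Gobj G' Ms))
  (A : zmodType) (act : mcar (Gobj G' Ms) -> A -> A)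
  (hA : forall X : Type, st C X -> (X -> A) -> Prop)
  (* N' is a normal subgroup of G'; N = N' x prod_i M_i^{e'_i} *)
  (HN' : normal_subgroup iota')
  (Hes : size es = size Ms)
  (* pi : G -> G/N is the cokernel of N -> G, with kernel N *)
  (Hcok : is_mcokernel (@Nincl C N' G' iota' Ms es) pi)
  (Hker : is_kernel (@Nincl C N' G' iota' Ms es) pi)
  (* the section s *)
  (Hs_adm : adm (mst Q) (mst (Gobj G' Ms)) s)
  (Hs : forall q, pi (s q) = q)
  (Hs1 : exists q0, s q0 = mone (Gobj G' Ms))
  (* (A, h_A) is a G-module with C-rigidification *)
  (HA : is_module act)
  (HhA : is_rigidification act hA)
  (p : nat) :
  let K := ss1_num pi act hA p 0 in
  let D := ss1_den pi act hA p 0 in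
  let AN := @Ninvariant C (Nobj N' Ms es) (Gobj G' Ms) (@Nincl C N' G' iota' Ms es) A act in
  exists phi : (seq (mcar (Gobj G' Ms)) -> A) -> (seq (mcar Q) -> A),
    (* the denominator lies in the numerator *)
    (forall f, D f -> K f) /\
    [/\
        (* phi f is the unique f' (a function on (G/N)^p) with f = f' o pi^p *)
        forall f, K f ->
          [/\ (forall x, size x != p -> phi f x = 0),
              (forall x, size x = p -> f x = phi f (map pi x)) &
              forall f' : seq (mcar Q) -> A,
                (forall y, size y != p -> f' y = 0) ->
                (forall x, size x = p -> f x = f' (map pi x)) ->
                forall y, f' y = phi f y],
        (* phi lands in C^p(G/N, A^N) *)
        forall f, K f -> cochainQ hA AN p (phi f),
        (* phi is additive on the numerator *)
        forall f g, K f -> K g -> forall y, phi (fun x => f x - g x) y = phi f y - phi g y,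
        (* its kernel is exactly the denominator: injective on ss_1^{p,0} *)
        forall f, K f -> ((forall y, phi f y = 0) <-> D f) &
        (* surjective onto C^p(G/N, A^N) *)
        forall g, cochainQ hA AN p g -> exists2 f, K f & forall y, phi f y = g y].
Proof.
move=> K D AN.
have num_iff := numE Hs_adm Hs HA HhA p; have den_iff := den_zero pi HA HhA p.
exists (descend s p); split; first by move=> f /den_iff; exact: (num_zero Hs_adm Hs HA HhA).
split.
- move=> f /num_iff [_ fdesc _]; split; first exact: descend_supp.
    exact: (descend_factor Hs fdesc).
  exact: (descend_unique Hs).
- exact: (descend_cochainQ Hcok Hs_adm Hs HA HhA).
- by move=> f g _ _; exact: descend_sub.
- move=> f /num_iff [fcoch fdesc _].
  by split=> [/(descend_eq0 Hs fcoch fdesc)/den_iff | /den_iff/(descend_eq0 Hs fcoch fdesc)].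
- move=> g gcoch; exists (lift pi p g).
    exact: (lift_num HN' Hcok Hs_adm Hs HA HhA gcoch).
  exact: (descend_lift Hs gcoch).
Qed.
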